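(* Let $\mathcal{L}$ be a similarity type containing $0,+,-,\vee,\wedge,\bigvee^-$ (with $\bigvee^-$ of countably infinite arity), let $\mathbb{R}$ be an $\mathcal{L}$-algebra in which these symbols have their usual interpretations and $\bigvee^-(g,f_1,f_2,\dots)=\sup_{n\ge1}\{f_n\wedge g\}$, and let $\mathcal{Z}$ be the variety generated by this $\mathcal{L}$-algebra $\mathbb{R}$. If a quasi-equation with countably many premises $$[\tau_1=\rho_1,\ \tau_2=\rho_2,\ \dots]\Rightarrow\tau=\rho$$ ($\tau,\rho,\tau_n,\rho_n$ being $\mathcal{L}$-terms) holds in $\mathbb{R}$, then it holds in every $G\in\mathcal{Z}$.
   Context: A quasi-equation with countably many premises holds in an $\mathcal{L}$-algebra $A$ if for every assignment of the variables in $A$, whenever all premises $\tau_n=\rho_n$ hold, the conclusion $\tau=\rho$ holds. The variety generated by an algebra is the class of all algebras satisfying every equation (between possibly infinitary terms) true in it, equivalently its closure under products, subalgebras and homomorphic images. *)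

From Stdlib Require Import Reals.
Open Scope R_scope.

Inductive bsym : Type := s_zero | s_plus | s_neg | s_join | s_meet | s_bigv.

Definition bar (b : bsym) : Type :=
  match b with
  | s_zero => Empty_set
  | s_neg => unit
  | s_plus | s_join | s_meet => bool
  | s_bigv => nat   (* argument 0 is g, argument (S n) is f_(n+1) *)
  end.

(* A similarity type containing the basic symbols plus arbitrary extra
   symbols E with arbitrary arities ear. *)
Definition sym (E : Type) : Type := (bsym + E)%type.

Definition ar {E : Type} (ear : E -> Type) (s : sym E) : Type :=
  match s with inl b => bar b | inr e => ear e end.

Record alg (E : Type) (ear : E -> Type) : Type := Alg {
  carrier : Type;
  op : forall s : sym E, (ar ear s -> carrier) -> carrier }.
Arguments Alg {E ear} carrier op.
Arguments carrier {E ear} a.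
Arguments op {E ear} a s _.

Inductive term (E : Type) (ear : E -> Type) (X : Type) : Type :=
  | tvar : X -> term E ear X
  | tapp : forall s : sym E, (ar ear s -> term E ear X) -> term E ear X.
Arguments tvar {E ear X} _.
Arguments tapp {E ear X} s _.

Fixpoint eval {E : Type} {ear : E -> Type} {X : Type} (A : alg E ear)
  (v : X -> carrier A) (t : term E ear X) : carrier A :=
  match t with
  | tvar x => v x
  | tapp s f => op A s (fun i => eval A v (f i))
  end.

Definition eq_holds {E : Type} {ear : E -> Type} {X : Type} (A : alg E ear)
  (t u : term E ear X) : Prop :=
  forall v : X -> carrier A, eval A v t = eval A v u.

Definition qeq_holds {E : Type} {ear : E -> Type} {X : Type} (A : alg E ear)
  (ts us : nat -> term E ear X) (t u : term E ear X) : Prop :=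
  forall v : X -> carrier A,
    (forall n, eval A v (ts n) = eval A v (us n)) -> eval A v t = eval A v u.

Definition in_variety {E : Type} {ear : E -> Type} (A G : alg E ear) : Prop :=
  forall (X : Type) (t u : term E ear X), eq_holds A t u -> eq_holds G t u.

Definition usual_interp {E : Type} {ear : E -> Type}
  (opR : forall s : sym E, (ar ear s -> R) -> R) : Prop :=
  (forall f : ar ear (inl s_zero) -> R, opR (inl s_zero) f = 0) /\
  (forall f : ar ear (inl s_plus) -> R, opR (inl s_plus) f = f true + f false) /\
  (forall f : ar ear (inl s_neg) -> R, opR (inl s_neg) f = - f tt) /\
  (forall f : ar ear (inl s_join) -> R, opR (inl s_join) f = Rmax (f true) (f false)) /\
  (forall f : ar ear (inl s_meet) -> R, opR (inl s_meet) f = Rmin (f true) (f false)) /\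
  (forall f : ar ear (inl s_bigv) -> R,
     is_lub (fun y => exists n : nat, y = Rmin (f (S n)) (f O)) (opR (inl s_bigv) f)).

(* The quasi-equation can be traded for a single equation.  Over the reals
   one writes down a "switch" term T(p, q, a_0, b_0, a_1, b_1, ...) which takes
   the value q when a_n = b_n for every n and the value p otherwise:
   T = q + (((p - q) ∧ S) ∨ -S), where
   S = ⋁⁻(|p - q|, 0·M_0, 1·M_1, ...) and M_n = |a_0 - b_0| ∨ ... ∨ |a_n - b_n|.
   Indeed S = 0 when all the a_n = b_n, and S = |p - q| as soon as some
   a_k ≠ b_k, because then n·M_n grows without bound.  Substituting t, u,
   τ_n, ρ_n for p, q, a_n, b_n, the quasi-equation makes t = T(t, u, τ_n, ρ_n)
   an identity of ℝ, and T(p, q, a_n, a_n) = q is one as well.  Both identities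
   pass to every G in the variety, and together they give t = u in G whenever
   the premises hold. *)
From Stdlib Require Import Reals Lra Lia Classical FunctionalExtensionality.
Open Scope R_scope.

Fixpoint subst {E : Type} {ear : E -> Type} {X Y : Type}
  (sg : Y -> term E ear X) (t : term E ear Y) : term E ear X :=
  match t with
  | tvar y => sg y
  | tapp s f => tapp s (fun i => subst sg (f i))
  end.

Lemma eval_subst {E : Type} {ear : E -> Type} {X Y : Type} (A : alg E ear)
  (v : X -> carrier A) (sg : Y -> term E ear X) (t : term E ear Y) :
  eval A v (subst sg t) = eval A (fun y => eval A v (sg y)) t.
Proof.
  induction t as [y | s f IH]; simpl; [reflexivity |].
  f_equal. apply functional_extensionality. intro i. apply IH.
Qed.

Inductive switch_var : Type :=
  | sw_p | sw_q | sw_a (n : nat) | sw_b (n : nat).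

Definition switch_agree {C : Type} (w : switch_var -> C) : Prop :=
  forall n, w (sw_a n) = w (sw_b n).

Definition is_switch_term {E : Type} {ear : E -> Type} (A : alg E ear)
  (T : term E ear switch_var) : Prop :=
  forall w : switch_var -> carrier A,
    (switch_agree w -> eval A w T = w sw_q) /\
    (~ switch_agree w -> eval A w T = w sw_p).

Section Transfer.

Variables (E : Type) (ear : E -> Type) (A : alg E ear).
Variables (X : Type) (ts us : nat -> term E ear X) (t u : term E ear X).

Definition qeq_subst (y : switch_var) : term E ear X :=
  match y with
  | sw_p => t | sw_q => u | sw_a n => ts n | sw_b n => us n
  end.

Definition collapse_b (y : switch_var) : term E ear switch_var :=
  match y with sw_b n => tvar (sw_a n) | y => tvar y end.

Lemma switch_term_identity_of_qeq (T : term E ear switch_var) :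
  is_switch_term A T -> qeq_holds A ts us t u ->
  eq_holds A t (subst qeq_subst T).
Proof.
  intros HT Hq v. rewrite eval_subst.
  set (w := fun y => eval A v (qeq_subst y)).
  destruct (HT w) as [Hagree Hdisagree].
  destruct (classic (switch_agree w)) as [Hw | Hw].
  - rewrite (Hagree Hw). exact (Hq v Hw).
  - rewrite (Hdisagree Hw). reflexivity.
Qed.

Lemma switch_term_collapse_identity (T : term E ear switch_var) :
  is_switch_term A T -> eq_holds A (subst collapse_b T) (tvar sw_q).
Proof.
  intros HT w. rewrite eval_subst.
  exact (proj1 (HT (fun y => eval A w (collapse_b y))) (fun n => eq_refl)).
Qed.

Lemma qeq_transfer_of_switch_term (T : term E ear switch_var) :
  is_switch_term A T -> qeq_holds A ts us t u ->
  forall G : alg E ear, in_variety A G -> qeq_holds G ts us t u.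
Proof.
  intros HT Hq G HG v Hprem.
  set (w := fun y => eval G v (qeq_subst y)).
  assert (Hw : (fun y => eval G w (collapse_b y)) = w).
  { apply functional_extensionality. intros [| | n | n]; try reflexivity.
    exact (Hprem n). }
  rewrite (HG _ _ _ (switch_term_identity_of_qeq T HT Hq) v), eval_subst.
  fold w. change (eval G v u) with (eval G w (tvar sw_q)).
  rewrite <- (HG _ _ _ (switch_term_collapse_identity T HT) w), eval_subst, Hw.
  reflexivity.
Qed.

End Transfer.

Section Terms.

Context {E : Type} {ear : E -> Type} {X : Type}.

Definition tzero : term E ear X := tapp (inl s_zero) (Empty_set_rect _).
Definition tplus (x y : term E ear X) : term E ear X :=
  tapp (inl s_plus) (fun i : bool => if i then x else y).
Definition tneg (x : term E ear X) : term E ear X :=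
  tapp (inl s_neg) (fun _ : unit => x).
Definition tjoin (x y : term E ear X) : term E ear X :=
  tapp (inl s_join) (fun i : bool => if i then x else y).
Definition tmeet (x y : term E ear X) : term E ear X :=
  tapp (inl s_meet) (fun i : bool => if i then x else y).
Definition tbigv (g : term E ear X) (f : nat -> term E ear X) : term E ear X :=
  tapp (inl s_bigv) (fun i : nat => match i with O => g | S n => f n end).

Definition tsub (x y : term E ear X) : term E ear X := tplus x (tneg y).
Definition tabs (x : term E ear X) : term E ear X := tjoin x (tneg x).
Fixpoint tmuln (n : nat) (x : term E ear X) : term E ear X :=
  match n with O => tzero | S k => tplus x (tmuln k x) end.

End Terms.

Section SwitchTerm.

Context {E : Type} {ear : E -> Type}.

Definition tdisc (n : nat) : term E ear switch_var :=
  tabs (tsub (tvar (sw_a n)) (tvar (sw_b n))).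

Fixpoint tdisc_max (n : nat) : term E ear switch_var :=
  match n with O => tdisc O | S k => tjoin (tdisc_max k) (tdisc (S k)) end.

Definition tgauge : term E ear switch_var :=
  tbigv (tabs (tsub (tvar sw_p) (tvar sw_q))) (fun n => tmuln n (tdisc_max n)).

Definition tswitch : term E ear switch_var :=
  tplus (tvar sw_q)
    (tjoin (tmeet (tsub (tvar sw_p) (tvar sw_q)) tgauge) (tneg tgauge)).

End SwitchTerm.

Lemma is_lub_min_zero (f : nat -> R) (g l : R) :
  (forall n, f n = 0) -> 0 <= g ->
  is_lub (fun y => exists n, y = Rmin (f n) g) l -> l = 0.
Proof.
  intros Hf Hg Hl. apply (is_lub_u _ _ _ Hl). split.
  - intros y [n ->]. rewrite Hf. apply Rmin_l.
  - intros b Hb. apply Hb. exists O. rewrite Hf, Rmin_left; lra.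
Qed.

Lemma is_lub_min_unbounded (f : nat -> R) (g l : R) :
  (forall M, exists n, M <= f n) ->
  is_lub (fun y => exists n, y = Rmin (f n) g) l -> l = g.
Proof.
  intros Hf Hl. apply (is_lub_u _ _ _ Hl). split.
  - intros y [n ->]. apply Rmin_r.
  - intros b Hb. destruct (Hf g) as [n Hn]. apply Hb. exists n.
    rewrite Rmin_right; lra.
Qed.

Lemma muln_eventually_ge_unbounded (m : nat -> R) (k : nat) (d : R) :
  0 < d -> (forall n, (k <= n)%nat -> d <= m n) ->
  forall M, exists n, M <= INR n * m n.
Proof.
  intros Hd Hm M. destruct (INR_archimed d M Hd) as [N HN].
  exists (N + k)%nat.
  assert (HNk : INR N <= INR (N + k)) by (apply le_INR; lia).
  assert (Hmk := Hm (N + k)%nat ltac:(lia)).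
  assert (INR (N + k) * d <= INR (N + k) * m (N + k)%nat)
    by (apply Rmult_le_compat_l; [apply pos_INR | exact Hmk]).
  assert (INR N * d <= INR (N + k) * d) by (apply Rmult_le_compat_r; lra).
  lra.
Qed.

Section RealSwitch.

Variables (E : Type) (ear : E -> Type).
Variable opR : forall s : sym E, (ar ear s -> R) -> R.
Hypothesis Husual : usual_interp opR.

Definition evR {X : Type} (w : X -> R) (t : term E ear X) : R :=
  eval (Alg R opR) w t.

Section Operations.

Context {X : Type} (w : X -> R).

Lemma evR_zero : evR w tzero = 0.
Proof. destruct Husual as (H & _). apply H. Qed.

Lemma evR_plus x y : evR w (tplus x y) = evR w x + evR w y.
Proof. destruct Husual as (_ & H & _). apply H. Qed.

Lemma evR_neg x : evR w (tneg x) = - evR w x.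
Proof. destruct Husual as (_ & _ & H & _). apply H. Qed.

Lemma evR_join x y : evR w (tjoin x y) = Rmax (evR w x) (evR w y).
Proof. destruct Husual as (_ & _ & _ & H & _). apply H. Qed.

Lemma evR_meet x y : evR w (tmeet x y) = Rmin (evR w x) (evR w y).
Proof. destruct Husual as (_ & _ & _ & _ & H & _). apply H. Qed.

Lemma evR_bigv g f :
  is_lub (fun y => exists n, y = Rmin (evR w (f n)) (evR w g)) (evR w (tbigv g f)).
Proof.
  destruct Husual as (_ & _ & _ & _ & _ & H).
  exact (H (fun i => evR w (match i with O => g | S n => f n end))).
Qed.

Lemma evR_sub x y : evR w (tsub x y) = evR w x - evR w y.
Proof. unfold tsub. rewrite evR_plus, evR_neg. reflexivity. Qed.

Lemma evR_abs x : evR w (tabs x) = Rabs (evR w x).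
Proof.
  unfold tabs. rewrite evR_join, evR_neg.
  unfold Rmax, Rabs. destruct Rle_dec, Rcase_abs; lra.
Qed.

Lemma evR_muln n x : evR w (tmuln n x) = INR n * evR w x.
Proof.
  induction n as [| n IH]; cbn [tmuln].
  - rewrite evR_zero. simpl. ring.
  - rewrite evR_plus, IH, S_INR. ring.
Qed.

End Operations.

Section Gauge.

Variable w : switch_var -> R.

Lemma evR_disc n : evR w (tdisc n) = Rabs (w (sw_a n) - w (sw_b n)).
Proof. unfold tdisc. rewrite evR_abs, evR_sub. reflexivity. Qed.

Lemma evR_disc_le_max k n : (k <= n)%nat -> evR w (tdisc k) <= evR w (tdisc_max n).
Proof.
  induction n as [| n IH]; intros Hkn; cbn [tdisc_max].
  - replace k with O by lia. lra.
  - rewrite evR_join. destruct (Nat.eq_dec k (S n)) as [-> | Hne].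
    + apply Rmax_r.
    + eapply Rle_trans; [apply IH; lia | apply Rmax_l].
Qed.

Lemma evR_disc_max_agree n : switch_agree w -> evR w (tdisc_max n) = 0.
Proof.
  intros Hw.
  assert (Hd : forall k, evR w (tdisc k) = 0)
    by (intro k; rewrite evR_disc, Hw, Rminus_diag; apply Rabs_R0).
  induction n as [| n IH]; cbn [tdisc_max]; [apply Hd |].
  rewrite evR_join, IH, Hd. apply Rmax_left. lra.
Qed.

Lemma evR_gauge_agree : switch_agree w -> evR w tgauge = 0.
Proof.
  intros Hw. refine (is_lub_min_zero _ _ _ _ _ (evR_bigv w _ _)).
  - intro n. rewrite evR_muln, evR_disc_max_agree by exact Hw. ring.
  - rewrite evR_abs. apply Rabs_pos.
Qed.

Lemma evR_gauge_disagree :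
  ~ switch_agree w -> evR w tgauge = Rabs (w sw_p - w sw_q).
Proof.
  intros Hw. apply not_all_ex_not in Hw as [k Hk].
  change (w sw_p - w sw_q) with (evR w (tvar sw_p) - evR w (tvar sw_q)).
  rewrite <- evR_sub, <- evR_abs.
  refine (is_lub_min_unbounded _ _ _ _ (evR_bigv w _ _)). intro M.
  assert (Hd : 0 < evR w (tdisc k)) by (rewrite evR_disc; apply Rabs_pos_lt; lra).
  destruct (muln_eventually_ge_unbounded (fun n => evR w (tdisc_max n)) k _ Hd
              (fun n => evR_disc_le_max k n) M) as [n Hn].
  exists n. rewrite evR_muln. exact Hn.
Qed.

End Gauge.

Lemma tswitch_is_switch_term : is_switch_term (Alg R opR) tswitch.
Proof.
  intro w. change (eval (Alg R opR) w tswitch) with (evR w tswitch).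
  unfold tswitch.
  rewrite evR_plus, evR_join, evR_meet, evR_neg, evR_sub. cbn [evR eval].
  split; intros Hw.
  - rewrite evR_gauge_agree by exact Hw.
    unfold Rmax, Rmin. destruct Rle_dec, Rle_dec; lra.
  - rewrite evR_gauge_disagree by exact Hw.
    unfold Rmax, Rmin, Rabs. destruct Rcase_abs, Rle_dec, Rle_dec; lra.
Qed.

End RealSwitch.

Theorem mainTheorem17 (E : Type) (ear : E -> Type)
  (opR : forall s : sym E, (ar ear s -> R) -> R)
  (Husual : usual_interp opR)
  (X : Type) (ts us : nat -> term E ear X) (t u : term E ear X) :
  qeq_holds (Alg R opR) ts us t u ->
  forall G : alg E ear, in_variety (Alg R opR) G -> qeq_holds G ts us t u.
Proof.
  exact (qeq_transfer_of_switch_term E ear (Alg R opR) X ts us t u tswitch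
           (tswitch_is_switch_term E ear opR Husual)).
Qed.
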